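(* Let $f$ be as in the standing setting and satisfy quadratic functional growth with constant $\kappa_f>0$: $f(x)-f^*\ge\frac{\kappa_f}{2}\|x-[x]_{X^*}\|^2$ for all $x\in X$. Let $\beta\ge0$, $L>0$, $\bar L_f>0$, and let $\{x^k\}\subseteq X$ be generated by a feasible descent method: for $k\ge0$, $$x^{k+1}=\big[x^k-\alpha_k\nabla f(x^k)+e^k\big]_X$$ with step sizes $\alpha_k\ge\bar L_f^{-1}$ and perturbations $e^k$ satisfying $\|e^k\|\le\beta\|x^{k+1}-x^k\|$ and $f(x^{k+1})\le f(x^k)-\frac{L}{2}\|x^{k+1}-x^k\|^2$. Then $$f(x^k)-f^*\le\left(\frac{1}{1+\frac{L\kappa_f}{4(L_f+\bar L_f+\beta\bar L_f)^2}}\right)^k\big(f(x^0)-f^*\big)\qquad\forall k\ge0.$$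
   Context: Standing setting: $X\subseteq\mathbb{R}^n$ is a nonempty closed convex set; $f:X\to\mathbb{R}$ is convex and continuously differentiable, with $L_f$-Lipschitz continuous gradient on $X$ ($L_f>0$). Consider $f^*=\min_{x\in X}f(x)$ with optimal set $X^*$ nonempty and closed and $f^*$ finite. $\|\cdot\|$ is the Euclidean norm and $[u]_S$ is the Euclidean projection onto a closed convex set $S$. *)

From Stdlib Require Import Reals.
From mathcomp Require Import ssreflect ssrfun ssrbool eqtype ssrnat fintype bigop.
Set Implicit Arguments. Unset Strict Implicit.

Open Scope R_scope.

Definition vec (n : nat) := 'I_n -> R.

Definition vadd {n} (x y : vec n) : vec n := fun i => x i + y i.
Definition vsub {n} (x y : vec n) : vec n := fun i => x i - y i.
Definition vscale {n} (a : R) (x : vec n) : vec n := fun i => a * x i.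

Definition dot {n} (x y : vec n) : R := \big[Rplus/0]_(i < n) (x i * y i).
Definition norm {n} (x : vec n) : R := sqrt (dot x x).

Definition rn_open {n} (U : vec n -> Prop) : Prop :=
  forall x, U x -> exists r, 0 < r /\ forall y, norm (vsub y x) < r -> U y.

Definition rn_converges {n} (u : nat -> vec n) (p : vec n) : Prop :=
  forall eps, 0 < eps -> exists N, forall k, (N <= k)%nat -> norm (vsub (u k) p) < eps.

Definition rn_closed {n} (S : vec n -> Prop) : Prop :=
  forall (u : nat -> vec n) p, (forall k, S (u k)) -> rn_converges u p -> S p.

Definition rn_convex {n} (S : vec n -> Prop) : Prop :=
  forall x y t, S x -> S y -> 0 <= t <= 1 ->
    S (vadd (vscale t x) (vscale (1 - t) y)).

Definition rn_nonempty {n} (S : vec n -> Prop) : Prop := exists x, S x.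

Definition is_proj {n} (S : vec n -> Prop) (u p : vec n) : Prop :=
  S p /\ forall q, S q -> norm (vsub u p) <= norm (vsub u q).

Definition rn_convex_on {n} (S : vec n -> Prop) (f : vec n -> R) : Prop :=
  forall x y t, S x -> S y -> 0 <= t <= 1 ->
    f (vadd (vscale t x) (vscale (1 - t) y)) <= t * f x + (1 - t) * f y.

Definition has_gradient_on {n} (U : vec n -> Prop) (f : vec n -> R) (g : vec n -> vec n) : Prop :=
  forall x, U x -> forall eps, 0 < eps -> exists delta, 0 < delta /\
    forall y, norm (vsub y x) < delta ->
      Rabs (f y - f x - dot (g x) (vsub y x)) <= eps * norm (vsub y x).

Definition rn_continuous_on {n} (U : vec n -> Prop) (g : vec n -> vec n) : Prop :=
  forall x, U x -> forall eps, 0 < eps -> exists delta, 0 < delta /\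
    forall y, U y -> norm (vsub y x) < delta -> norm (vsub (g y) (g x)) < eps.

Definition C1_on {n} (X : vec n -> Prop) (f : vec n -> R) (g : vec n -> vec n) : Prop :=
  exists U : vec n -> Prop, rn_open U /\ (forall x, X x -> U x) /\
    has_gradient_on U f g /\ rn_continuous_on U g.

Definition rn_lipschitz_on {n} (X : vec n -> Prop) (g : vec n -> vec n) (L : R) : Prop :=
  forall x y, X x -> X y -> norm (vsub (g x) (g y)) <= L * norm (vsub x y).

Definition is_min_value {n} (X : vec n -> Prop) (f : vec n -> R) (fstar : R) : Prop :=
  (forall x, X x -> fstar <= f x) /\ (exists x, X x /\ f x = fstar).

Definition opt_set {n} (X : vec n -> Prop) (f : vec n -> R) (fstar : R) : vec n -> Prop :=
  fun x => X x /\ f x = fstar.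

From HB Require Import structures.
From Stdlib Require Import Reals Lra Psatz Classical IndefiniteDescription.
From mathcomp Require Import ssreflect ssrfun ssrbool eqtype ssrnat fintype bigop.
Set Implicit Arguments. Unset Strict Implicit.
Open Scope R_scope.

(* Write x = x^k, y = x^{k+1}, p = [y]_{X*}, r = |y - x|, s = |y - p| and
   M = L_f + Lbar_f + beta Lbar_f; the projection p exists because X* is nonempty,
   closed and convex.  Convexity gives f(y) - fstar <= <grad f(y), y - p>;
   splitting alpha_k grad f(y) through the projection step and bounding the three
   parts by the Lipschitz constant, the variational inequality of [.]_X and the
   bound on e^k yields the error bound f(y) - fstar <= M r s.  Quadratic growth turns
   this into kappa (f(y) - fstar) <= 2 M^2 r^2, and sufficient decrease bounds
   L r^2 / 2 by f(x) - f(y), which gives the one-step contraction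
   f(y) - fstar <= (f(x) - fstar) / (1 + L kappa / (4 M^2)). *)

HB.instance Definition _ := Monoid.isComLaw.Build R 0 Rplus
  (fun a b c => esym (Rplus_assoc a b c)) Rplus_comm Rplus_0_l.

Section Sums.
Context {n : nat}.
Implicit Types F G : 'I_n -> R.
Notation sum F := (\big[Rplus/0]_(i < n) F i).

Lemma sum_add F G : sum (fun i => F i + G i) = sum F + sum G.
Proof. by rewrite big_split. Qed.

Lemma sum_mul_l (c : R) F : sum (fun i => c * F i) = c * sum F.
Proof.
apply: (big_ind2 (fun a b => a = c * b)) => //; first by rewrite Rmult_0_r.
by move=> a b a' b' -> ->; ring.
Qed.

Lemma sum_sub F G : sum (fun i => F i - G i) = sum F - sum G.
Proof.
have -> : sum (fun i => F i - G i) = sum (fun i => F i + (-1) * G i).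
  by apply: eq_bigr => i _; ring.
by rewrite sum_add sum_mul_l; ring.
Qed.

Lemma sum_le F G : (forall i, F i <= G i) -> sum F <= sum G.
Proof.
move=> le_FG; apply: (big_ind2 (fun a b => a <= b)) => [|a b a' b' ? ?|i _]; [lra|lra|].
exact: le_FG.
Qed.

Lemma sum_nonneg F : (forall i, 0 <= F i) -> 0 <= sum F.
Proof.
move=> F_ge0; apply: (big_ind (fun a => 0 <= a)) => [|a b ? ?|i _]; [lra|lra|].
exact: F_ge0.
Qed.

Lemma sum_ge_term F j : (forall i, 0 <= F i) -> F j <= sum F.
Proof.
move=> F_ge0; rewrite (bigD1 j) //=.
have : 0 <= \big[Rplus/0]_(i < n | i != j) F i.
  by apply: (big_ind (fun a => 0 <= a)) => [|a b ? ?|i _]; [lra|lra|apply: F_ge0].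
move=> rest_ge0; have := Rplus_le_compat_l (F j) _ _ rest_ge0.
by rewrite Rplus_0_r.
Qed.

Lemma sum_const (c : R) : sum (fun _ => c) = INR n * c.
Proof.
rewrite big_const_ord; elim: n => [|m IH]; first by rewrite /= Rmult_0_l.
by rewrite iterS IH S_INR; ring.
Qed.

End Sums.

Section Vectors.
Context {n : nat}.
Implicit Types x y z u v : vec n.

Lemma dot_ext x x' y y' :
  (forall i, x i = x' i) -> (forall i, y i = y' i) -> dot x y = dot x' y'.
Proof. by move=> ex ey; apply: eq_bigr => i _; rewrite ex ey. Qed.

Lemma dot_comm x y : dot x y = dot y x.
Proof. by apply: eq_bigr => i _; ring. Qed.

Lemma dot_subl x y z : dot (vsub x y) z = dot x z - dot y z.
Proof. by rewrite /dot -sum_sub; apply: eq_bigr => i _; rewrite /vsub; ring. Qed.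

Lemma dot_subr x y z : dot z (vsub x y) = dot z x - dot z y.
Proof. by rewrite !(dot_comm z) dot_subl. Qed.

Lemma dot_scalel a x z : dot (vscale a x) z = a * dot x z.
Proof. by rewrite /dot -sum_mul_l; apply: eq_bigr => i _; rewrite /vscale; ring. Qed.

Lemma dot_self_nonneg x : 0 <= dot x x.
Proof. by apply: sum_nonneg => i; nra. Qed.

Lemma norm_nonneg x : 0 <= norm x.
Proof. exact: sqrt_pos. Qed.

Lemma norm_sqr x : norm x ^ 2 = dot x x.
Proof. by rewrite /norm pow2_sqrt //; apply: dot_self_nonneg. Qed.

Lemma norm_ext x y : (forall i, x i = y i) -> norm x = norm y.
Proof. by move=> exy; rewrite /norm (@dot_ext x y x y exy exy). Qed.

Lemma norm_subC x y : norm (vsub x y) = norm (vsub y x).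
Proof. by congr sqrt; apply: eq_bigr => i _; rewrite /vsub; ring. Qed.

Lemma norm_le_of_dot_le x c : 0 <= c -> dot x x <= c ^ 2 -> norm x <= c.
Proof. by move=> c_ge0 le_xc; rewrite /norm -(sqrt_pow2 c c_ge0); apply: sqrt_le_1_alt. Qed.

Lemma norm_lt_of_dot_lt x c : 0 < c -> dot x x < c ^ 2 -> norm x < c.
Proof.
move=> c_gt0 lt_xc; rewrite /norm -(sqrt_pow2 c); last lra.
by apply: sqrt_lt_1_alt; split=> //; apply: dot_self_nonneg.
Qed.

Lemma norm_scale a x : 0 <= a -> norm (vscale a x) = a * norm x.
Proof.
move=> a_ge0; rewrite /norm dot_scalel dot_comm dot_scalel -Rmult_assoc.
rewrite sqrt_mult_alt; last nra.
have -> : a * a = a ^ 2 by ring.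
by rewrite sqrt_pow2.
Qed.

Lemma abs_coord_le_norm x i : Rabs (x i) <= norm x.
Proof.
rewrite -sqrt_Rsqr_abs Rsqr_pow2; apply: sqrt_le_1_alt.
have -> : x i ^ 2 = x i * x i by ring.
by apply: (sum_ge_term (F := fun j => x j * x j)) => j; nra.
Qed.

Lemma dot_sub_scale_self x y t :
  dot (vsub x (vscale t y)) (vsub x (vscale t y)) =
  dot x x - 2 * t * dot x y + t ^ 2 * dot y y.
Proof.
rewrite /dot -!sum_mul_l -sum_sub -sum_add.
by apply: eq_bigr => i _; rewrite /vsub /vscale; ring.
Qed.

Lemma cauchy_schwarz_sqr x y : dot x y ^ 2 <= dot x x * dot y y.
Proof.
have quad_ge0 t : 0 <= dot x x - 2 * t * dot x y + t ^ 2 * dot y y.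
  by rewrite -dot_sub_scale_self; apply: dot_self_nonneg.
have := dot_self_nonneg x; have := dot_self_nonneg y.
case: (Req_dec (dot y y) 0) => [yy0 _ _ | yy_neq0 yy_ge0 _].
- have := quad_ge0 ((dot x x + 1) / (2 * dot x y)); rewrite yy0.
  case: (Req_dec (dot x y) 0) => [-> | xy_neq0]; first nra.
  have -> : dot x x - 2 * ((dot x x + 1) / (2 * dot x y)) * dot x y = -1 by field.
  lra.
- have := quad_ge0 (dot x y / dot y y).
  have -> : dot x x - 2 * (dot x y / dot y y) * dot x y + (dot x y / dot y y) ^ 2 * dot y y
            = (dot x x * dot y y - dot x y ^ 2) / dot y y by field.
  move=> h; have : 0 < / dot y y by apply: Rinv_0_lt_compat; lra.
  rewrite /Rdiv in h; nra.
Qed.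

Lemma cauchy_schwarz x y : Rabs (dot x y) <= norm x * norm y.
Proof.
rewrite -sqrt_Rsqr_abs /norm -sqrt_mult_alt; last exact: dot_self_nonneg.
by apply: sqrt_le_1_alt; rewrite Rsqr_pow2; apply: cauchy_schwarz_sqr.
Qed.

Lemma dot_le_norm_mul x y : dot x y <= norm x * norm y.
Proof. exact: Rle_trans (Rle_abs _) (cauchy_schwarz x y). Qed.

Lemma norm_triangle u a b : (forall i, u i = a i + b i) -> norm u <= norm a + norm b.
Proof.
move=> eq_u; apply: norm_le_of_dot_le.
  by have := norm_nonneg a; have := norm_nonneg b; lra.
have eq_u' i : u i = vsub a (vscale (-1) b) i by rewrite eq_u /vsub /vscale; ring.
rewrite (dot_ext eq_u' eq_u') dot_sub_scale_self -!norm_sqr.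
by have := dot_le_norm_mul a b; have := norm_nonneg a; have := norm_nonneg b; nra.
Qed.

End Vectors.

Lemma Rabs_le_between (a b : R) : Rabs a <= b -> - b <= a <= b.
Proof. by move=> le_ab; have := Rle_abs a; have := Rle_abs (- a); rewrite Rabs_Ropp; lra. Qed.

Lemma le_of_le_add_mul_eps (a b c : R) :
  0 <= c -> (forall eps, 0 < eps -> a <= b + eps * c) -> a <= b.
Proof.
move=> c_ge0 le_ab; apply: Rle_plus_epsilon => eta eta_gt0.
have frac_gt0 : 0 < eta / (c + 1) by apply: Rdiv_lt_0_compat; lra.
have := le_ab _ frac_gt0.
have -> : eta / (c + 1) * c = eta - eta / (c + 1) by field; lra.
lra.
Qed.

Lemma inv_INR_succ_pos k : 0 < / INR k.+1.
Proof. by apply: Rinv_0_lt_compat; apply: lt_0_INR; apply/ltP. Qed.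

Lemma inv_INR_succ_le1 k : / INR k.+1 <= 1.
Proof.
rewrite -Rinv_1; apply: Rinv_le_contravar; first lra.
by rewrite S_INR; have := pos_INR k; lra.
Qed.

Lemma inv_INR_succ_eventually_lt r :
  0 < r -> exists N, forall k, (N <= k)%nat -> / INR k.+1 < r.
Proof.
move=> r_gt0; have [N [lt_r N_gt0]] := archimed_cor1 r r_gt0.
exists N => k /leP le_Nk; apply: Rle_lt_trans lt_r.
by apply: Rinv_le_contravar; [apply: lt_0_INR | apply: le_INR]; lia.
Qed.

Lemma Rabs_sub_lim_le (u : nat -> R) l a c N :
  Un_cv u l -> (forall k, (N <= k)%nat -> Rabs (a - u k) <= c) -> Rabs (a - l) <= c.
Proof.
move=> cv_u near_a; apply: Rle_plus_epsilon => eta eta_gt0.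
have [M near_l] := cv_u eta eta_gt0.
have lt_eta := near_l (maxn M N) (leP (leq_maxl M N)).
have le_c := near_a (maxn M N) (leq_maxr M N).
have -> : a - l = (a - u (maxn M N)) + (u (maxn M N) - l) by ring.
by apply: Rle_trans (Rabs_triang _ _) _; rewrite /R_dist in lt_eta; lra.
Qed.

Lemma rn_cauchy_converges {n} (u : nat -> vec n) :
  (forall r, 0 < r -> exists N, forall k l, (N <= k)%nat -> (N <= l)%nat ->
     norm (vsub (u k) (u l)) < r) ->
  exists p, rn_converges u p.
Proof.
move=> cauchy.
have coord_cauchy i : Cauchy_crit (fun k => u k i).
  move=> r r_gt0; have [N near] := cauchy r r_gt0.
  exists N => k l /leP le_Nk /leP le_Nl.
  exact: Rle_lt_trans (abs_coord_le_norm (vsub (u k) (u l)) i) (near k l le_Nk le_Nl).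
pose p i := proj1_sig (R_complete _ (coord_cauchy i)).
have cv_p i : Un_cv (fun k => u k i) (p i) by rewrite /p; case: R_complete.
exists p => r r_gt0.
set r' := r / (INR n + 1).
have n_ge0 := pos_INR n.
have r'_gt0 : 0 < r' by apply: Rdiv_lt_0_compat; lra.
have [N near] := cauchy r' r'_gt0.
exists N => k le_Nk; apply: norm_lt_of_dot_lt => //.
have coord_le i : Rabs (u k i - p i) <= r'.
  apply: (Rabs_sub_lim_le (N := N) (cv_p i)) => l le_Nl; apply: Rlt_le.
  exact: Rle_lt_trans (abs_coord_le_norm (vsub (u k) (u l)) i) (near k l le_Nk le_Nl).
have : dot (vsub (u k) p) (vsub (u k) p) <= INR n * r' ^ 2.
  rewrite -sum_const; apply: sum_le => i.
  have := coord_le i; have := Rabs_pos (u k i - p i); have := Rsqr_abs (u k i - p i).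
  by rewrite /Rsqr /vsub; nra.
have : r' * (INR n + 1) = r by rewrite /r'; field; lra.
nra.
Qed.

Lemma ex_inf_nonneg (P : R -> Prop) :
  (exists r, P r) -> (forall r, P r -> 0 <= r) ->
  exists m, 0 <= m /\ (forall r, P r -> m <= r) /\
            forall eps, 0 < eps -> exists r, P r /\ r < m + eps.
Proof.
move=> [r0 P_r0] P_ge0.
pose E r := P (- r).
have E_ub0 : is_upper_bound E 0 by move=> r E_r; have := P_ge0 _ E_r; lra.
have E_r0 : E (- r0) by rewrite /E Ropp_involutive.
have [M [M_ub M_lub]] := completeness E (ex_intro _ 0 E_ub0) (ex_intro _ _ E_r0).
exists (- M); split; first by have := M_lub 0 E_ub0; lra.
split=> [r P_r | eps eps_gt0].
- have E_r : E (- r) by rewrite /E Ropp_involutive.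
  by have := M_ub _ E_r; lra.
- apply: NNPP => no_r.
  suff : M <= M - eps by lra.
  apply: M_lub => r E_r; apply: Rnot_lt_le => lt_r.
  by apply: no_r; exists (- r); split=> //; lra.
Qed.

Lemma midpoint_dist_bound {n} (y q1 q2 : vec n) m :
  0 <= m -> m <= norm (vsub y (vadd (vscale (1 / 2) q1) (vscale (1 - 1 / 2) q2))) ->
  norm (vsub q1 q2) ^ 2 <= 2 * norm (vsub y q1) ^ 2 + 2 * norm (vsub y q2) ^ 2 - 4 * m ^ 2.
Proof.
set mid := vadd _ _ => m_ge0 le_m.
have parallelogram : dot (vsub q1 q2) (vsub q1 q2) + 4 * dot (vsub y mid) (vsub y mid) =
    2 * dot (vsub y q1) (vsub y q1) + 2 * dot (vsub y q2) (vsub y q2).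
  rewrite /dot -!sum_mul_l -!sum_add; apply: eq_bigr => i _.
  by rewrite /mid /vsub /vadd /vscale; field.
have := pow_incr _ _ 2 (conj m_ge0 le_m).
by rewrite !norm_sqr; lra.
Qed.

Lemma proj_exists {n} (S : vec n -> Prop) y :
  rn_nonempty S -> rn_closed S -> rn_convex S -> exists p, is_proj S y p.
Proof.
move=> S_nonempty S_closed S_convex.
pose dists r := exists q, S q /\ r = norm (vsub y q).
have dists_nonempty : exists r, dists r.
  by case: S_nonempty => q S_q; exists (norm (vsub y q)), q.
have dists_ge0 r : dists r -> 0 <= r by move=> [q [_ ->]]; apply: norm_nonneg.
have [m [m_ge0 [m_lb m_approx]]] := ex_inf_nonneg dists_nonempty dists_ge0.
have dist_ge q : S q -> m <= norm (vsub y q) by move=> S_q; apply: m_lb; exists q.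
have [qs qs_spec] : exists qs : nat -> vec n,
    forall k, S (qs k) /\ norm (vsub y (qs k)) < m + / INR k.+1.
  apply: (functional_choice (fun k q => S q /\ norm (vsub y q) < m + / INR k.+1)) => k.
  by have [_ [[q [S_q ->]] lt_q]] := m_approx _ (inv_INR_succ_pos k); exists q.
have qs_cauchy r : 0 < r -> exists N, forall k l, (N <= k)%nat -> (N <= l)%nat ->
    norm (vsub (qs k) (qs l)) < r.
  move=> r_gt0.
  (* With e_k = 1 / (k + 1) <= 1 the midpoint bound gives
     |q_k - q_l|^2 <= (4 m + 2) (e_k + e_l). *)
  have [N small] := inv_INR_succ_eventually_lt (r := r ^ 2 / (8 * m + 4))
    ltac:(apply: Rdiv_lt_0_compat; nra).
  exists N => k l le_Nk le_Nl; apply: norm_lt_of_dot_lt => //; rewrite -norm_sqr.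
  have [S_k lt_k] := qs_spec k; have [S_l lt_l] := qs_spec l.
  have := midpoint_dist_bound m_ge0 (dist_ge _ (S_convex _ _ (1 / 2) S_k S_l ltac:(lra))).
  have := small k le_Nk; have := small l le_Nl.
  have := inv_INR_succ_pos k; have := inv_INR_succ_pos l.
  have := inv_INR_succ_le1 k; have := inv_INR_succ_le1 l.
  have := norm_nonneg (vsub y (qs k)); have := norm_nonneg (vsub y (qs l)).
  have : r ^ 2 / (8 * m + 4) * (8 * m + 4) = r ^ 2 by field; lra.
  nra.
have [p qs_cv] := rn_cauchy_converges qs_cauchy.
have S_p : S p := S_closed qs p (fun k => proj1 (qs_spec k)) qs_cv.
exists p; split=> // q S_q; apply: Rle_trans (dist_ge _ S_q).
apply: Rle_plus_epsilon => eta eta_gt0.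
have [N1 near_p] := qs_cv (eta / 2) ltac:(lra).
have [N2 small] := inv_INR_succ_eventually_lt (r := eta / 2) ltac:(lra).
set k := maxn N1 N2.
have := near_p k (leq_maxl N1 N2); have := small k (leq_maxr N1 N2).
have := proj2 (qs_spec k).
have := norm_triangle (u := vsub y p) (a := vsub y (qs k)) (b := vsub (qs k) p)
  ltac:(by move=> i; rewrite /vsub; ring).
lra.
Qed.

Lemma proj_variational_ineq {n} (S : vec n -> Prop) z y w :
  rn_convex S -> is_proj S z y -> S w -> dot (vsub z y) (vsub w y) <= 0.
Proof.
move=> S_convex [S_y y_min] S_w.
set B := dot (vsub z y) (vsub w y); set C := dot (vsub w y) (vsub w y).
have C_ge0 : 0 <= C by apply: dot_self_nonneg.
suff : 2 * B <= 0 by lra.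
apply: (le_of_le_add_mul_eps C_ge0) => t t_gt0.
wlog t_le1 : t t_gt0 / t <= 1.
  move=> small_t; case: (Rle_lt_dec t 1) => [|t_gt1]; first exact: small_t.
  by have := small_t 1 Rlt_0_1 (Rle_refl 1); nra.
have := y_min _ (S_convex _ _ t S_w S_y (conj (Rlt_le _ _ t_gt0) t_le1)).
move=> /(fun le_yt => pow_incr _ _ 2 (conj (norm_nonneg _) le_yt)).
have shift i : vsub z (vadd (vscale t w) (vscale (1 - t) y)) i =
               vsub (vsub z y) (vscale t (vsub w y)) i.
  by rewrite /vsub /vadd /vscale; ring.
rewrite !norm_sqr (dot_ext shift shift) dot_sub_scale_self -/B -/C.
nra.
Qed.

Lemma convex_gradient_ineq {n} (X U : vec n -> Prop) f g y w :
  rn_convex_on X f -> has_gradient_on U f g -> U y -> X y -> X w ->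
  dot (g y) (vsub w y) <= f w - f y.
Proof.
move=> f_convex grad U_y X_y X_w.
set d := vsub w y; have d_ge0 := norm_nonneg d.
apply: (le_of_le_add_mul_eps d_ge0) => eps eps_gt0.
have [del [del_gt0 near_y]] := grad y U_y eps eps_gt0.
set t := Rmin 1 (del / (norm d + 1)).
have t_gt0 : 0 < t by apply: Rmin_glb_lt; [lra | apply: Rdiv_lt_0_compat; lra].
have t_le1 : t <= 1 by apply: Rmin_l.
have t_small : t * (norm d + 1) <= del.
  have := Rmult_le_compat_r (norm d + 1) _ _ ltac:(lra) (Rmin_r 1 (del / (norm d + 1))).
  by rewrite -/t /Rdiv Rmult_assoc Rinv_l; lra.
set yt := vadd (vscale t w) (vscale (1 - t) y).
have step i : vsub yt y i = vscale t d i by rewrite /yt /d /vsub /vadd /vscale; ring.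
have norm_step : norm (vsub yt y) = t * norm d.
  by rewrite (norm_ext step) norm_scale //; lra.
have dot_step : dot (g y) (vsub yt y) = t * dot (g y) d.
  by rewrite (dot_ext (fun i => erefl) step) dot_comm dot_scalel dot_comm.
have := near_y yt ltac:(rewrite norm_step; nra).
rewrite dot_step norm_step => /Rabs_le_between [lin_le _].
have := f_convex _ _ t X_w X_y (conj (Rlt_le _ _ t_gt0) t_le1); rewrite -/yt => conv.
apply: (Rmult_le_reg_l _ _ _ t_gt0); nra.
Qed.

Lemma has_gradient_continuous {n} (U : vec n -> Prop) f g p eps :
  has_gradient_on U f g -> U p -> 0 < eps ->
  exists del, 0 < del /\ forall y, norm (vsub y p) < del -> Rabs (f y - f p) <= eps.
Proof.
move=> grad U_p eps_gt0.
have [del [del_gt0 near_p]] := grad p U_p 1 Rlt_0_1.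
set G := norm (g p); have G_ge0 : 0 <= G by apply: norm_nonneg.
exists (Rmin del (eps / (G + 1))); split.
  by apply: Rmin_glb_lt => //; apply: Rdiv_lt_0_compat; lra.
move=> y lt_y.
have lt_del := Rlt_le_trans _ _ _ lt_y (Rmin_l _ _).
have lt_eps := Rlt_le_trans _ _ _ lt_y (Rmin_r _ _).
have := Rmult_lt_compat_r (G + 1) _ _ ltac:(lra) lt_eps.
rewrite /Rdiv Rmult_assoc Rinv_l; last lra.
have := near_p y lt_del; have := cauchy_schwarz (g p) (vsub y p); rewrite -/G.
have := Rabs_triang (f y - f p - dot (g p) (vsub y p)) (dot (g p) (vsub y p)).
have -> : f y - f p - dot (g p) (vsub y p) + dot (g p) (vsub y p) = f y - f p by ring.
lra.
Qed.

Lemma opt_set_closed {n} (X : vec n -> Prop) f g fstar :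
  rn_closed X -> C1_on X f g -> is_min_value X f fstar -> rn_closed (opt_set X f fstar).
Proof.
move=> X_closed [U [_ [X_U [grad _]]]] [f_ge _] u p u_opt u_cv.
have X_p : X p := X_closed u p (fun k => proj1 (u_opt k)) u_cv.
split=> //; apply: Rle_antisym; last exact: f_ge.
apply: Rle_plus_epsilon => eps eps_gt0.
have [del [del_gt0 f_near]] := has_gradient_continuous grad (X_U p X_p) eps_gt0.
have [N near] := u_cv del del_gt0.
have := f_near _ (near N (leqnn N)); rewrite (proj2 (u_opt N)).
by move=> /Rabs_le_between; lra.
Qed.

Lemma opt_set_convex {n} (X : vec n -> Prop) f fstar :
  rn_convex X -> rn_convex_on X f -> is_min_value X f fstar -> rn_convex (opt_set X f fstar).
Proof.
move=> X_convex f_convex [f_ge _] a b t [X_a f_a] [X_b f_b] t01.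
have X_ab := X_convex a b t X_a X_b t01.
split=> //; apply: Rle_antisym; last exact: f_ge.
by have := f_convex a b t X_a X_b t01; rewrite f_a f_b; lra.
Qed.

Lemma projected_step_gap_le {n} (X U : vec n -> Prop) f g Lf beta a (x y e p : vec n) :
  rn_convex X -> rn_convex_on X f -> has_gradient_on U f g -> (forall z, X z -> U z) ->
  rn_lipschitz_on X g Lf -> 0 < a -> X x -> X p ->
  is_proj X (vadd (vsub x (vscale a (g x))) e) y ->
  norm e <= beta * norm (vsub y x) ->
  f y - f p <= (Lf + (1 + beta) / a) * norm (vsub y x) * norm (vsub y p).
Proof.
move=> X_convex f_convex grad X_U g_lip a_gt0 X_x X_p y_proj e_small.
set z := vadd _ _ in y_proj.
have X_y : X y := proj1 y_proj.
set r := norm (vsub y x) in e_small *; set s := norm (vsub y p).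
have s_ge0 : 0 <= s by apply: norm_nonneg.
have gap_le : f y - f p <= dot (g y) (vsub y p).
  have := convex_gradient_ineq f_convex grad (X_U y X_y) X_y X_p.
  by rewrite !dot_subr; lra.
(* [a g(y)] splits along [z - y = (x - y + e) - a g(x)]. *)
have grad_split : a * dot (g y) (vsub y p) =
    a * dot (vsub (g y) (g x)) (vsub y p) + dot (vsub z y) (vsub p y)
    + dot (vadd (vsub x y) e) (vsub y p).
  rewrite /dot -!sum_mul_l -!sum_add; apply: eq_bigr => i _.
  by rewrite /z /vsub /vadd /vscale; ring.
have lip_term : dot (vsub (g y) (g x)) (vsub y p) <= Lf * r * s.
  apply: Rle_trans (dot_le_norm_mul _ _) _; apply: Rmult_le_compat_r => //.
  exact: g_lip.
have proj_term : dot (vsub z y) (vsub p y) <= 0.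
  exact: proj_variational_ineq X_convex y_proj X_p.
have err_term : dot (vadd (vsub x y) e) (vsub y p) <= (1 + beta) * r * s.
  apply: Rle_trans (dot_le_norm_mul _ _) _; apply: Rmult_le_compat_r => //.
  have := norm_triangle (u := vadd (vsub x y) e) (fun i => erefl).
  by rewrite norm_subC -/r; lra.
apply: (Rmult_le_reg_l _ _ _ a_gt0).
have -> : a * ((Lf + (1 + beta) / a) * r * s) = a * (Lf * r * s) + (1 + beta) * r * s.
  by field; lra.
have := Rmult_le_compat_l _ _ _ (Rlt_le _ _ a_gt0) lip_term.
have := Rmult_le_compat_l _ _ _ (Rlt_le _ _ a_gt0) gap_le.
lra.
Qed.

Lemma gap_contraction (D D0 r s kappa L M : R) :
  0 < kappa -> 0 < L -> 0 < M -> 0 <= D ->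
  kappa / 2 * s ^ 2 <= D -> D <= M * r * s -> L / 2 * r ^ 2 <= D0 - D ->
  D <= / (1 + L * kappa / (4 * M ^ 2)) * D0.
Proof.
move=> kappa_gt0 L_gt0 M_gt0 D_ge0 growth error_bound descent.
have kappa_D : kappa * D <= 2 * M ^ 2 * r ^ 2.
  case: (Rle_lt_or_eq_dec 0 D D_ge0) => [D_gt0 | D_eq0].
  - have sq_le := Rmult_le_compat _ _ _ _ D_ge0 D_ge0 error_bound error_bound.
    have := Rmult_le_compat_l _ _ _ (Rlt_le _ _ kappa_gt0) sq_le.
    have := Rmult_le_compat_l (M ^ 2 * r ^ 2) _ _ ltac:(nra) growth.
    by move=> ? ?; apply: (Rmult_le_reg_r _ _ _ D_gt0); nra.
  - by rewrite -D_eq0 Rmult_0_r; nra.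
have -> : / (1 + L * kappa / (4 * M ^ 2)) * D0 = 4 * M ^ 2 * D0 / (4 * M ^ 2 + L * kappa).
  by field; split; nra.
have den_gt0 : 0 < 4 * M ^ 2 + L * kappa by nra.
apply: (Rmult_le_reg_r _ _ _ den_gt0).
rewrite /Rdiv Rmult_assoc Rinv_l; nra.
Qed.

Lemma le_pow_mul_of_contraction (u : nat -> R) q :
  0 <= q -> (forall k, u k.+1 <= q * u k) -> forall k, u k <= q ^ k * u 0%nat.
Proof.
move=> q_ge0 step; elim=> [|k IH] /=; first lra.
by apply: Rle_trans (step k) _; rewrite Rmult_assoc; apply: Rmult_le_compat_l.
Qed.

Theorem theorem15 (n : nat) (X : vec n -> Prop) (f : vec n -> R) (gradf : vec n -> vec n)
  (Lf fstar kappa beta L Lbar : R)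
  (x e : nat -> vec n) (alpha : nat -> R) :
  rn_nonempty X -> rn_closed X -> rn_convex X ->
  rn_convex_on X f -> C1_on X f gradf ->
  0 < Lf -> rn_lipschitz_on X gradf Lf ->
  is_min_value X f fstar ->
  0 < kappa ->
  (forall y p, X y -> is_proj (opt_set X f fstar) y p ->
      kappa / 2 * (norm (vsub y p)) ^ 2 <= f y - fstar) ->
  0 <= beta -> 0 < L -> 0 < Lbar ->
  (forall k, X (x k)) ->
  (forall k, is_proj X (vadd (vsub (x k) (vscale (alpha k) (gradf (x k)))) (e k)) (x (S k))) ->
  (forall k, / Lbar <= alpha k) ->
  (forall k, norm (e k) <= beta * norm (vsub (x (S k)) (x k))) ->
  (forall k, f (x (S k)) <= f (x k) - L / 2 * (norm (vsub (x (S k)) (x k))) ^ 2) ->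
  forall k : nat,
    f (x k) - fstar <=
      (/ (1 + L * kappa / (4 * (Lf + Lbar + beta * Lbar) ^ 2))) ^ k * (f (x 0%nat) - fstar).
Proof.
move=> _ X_closed X_convex f_convex f_C1 Lf_gt0 g_lip f_min kappa_gt0 growth beta_ge0
  L_gt0 Lbar_gt0 X_x x_step alpha_ge e_small descent.
have [U [_ [X_U [grad _]]]] := f_C1.
set M := Lf + Lbar + beta * Lbar.
have M_gt0 : 0 < M by rewrite /M; nra.
have opt_nonempty : rn_nonempty (opt_set X f fstar).
  by case: f_min => _ [x0 opt_x0]; exists x0.
have ratio_gt0 : 0 < L * kappa / (4 * M ^ 2) by apply: Rdiv_lt_0_compat; nra.
apply: le_pow_mul_of_contraction => [|k].
  by apply/Rlt_le/Rinv_0_lt_compat; lra.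
have [p p_proj] := proj_exists (x k.+1) opt_nonempty (opt_set_closed X_closed f_C1 f_min)
  (opt_set_convex X_convex f_convex f_min).
have [[X_p f_p] _] := p_proj.
have alpha_inv_le : / alpha k <= Lbar.
  rewrite -(Rinv_inv Lbar); apply: Rinv_le_contravar (alpha_ge k).
  exact: Rinv_0_lt_compat.
have alpha_gt0 : 0 < alpha k by have := Rinv_0_lt_compat _ Lbar_gt0; have := alpha_ge k; lra.
have := projected_step_gap_le X_convex f_convex grad X_U g_lip alpha_gt0 (X_x k) X_p
  (x_step k) (e_small k).
rewrite f_p => gap_le.
apply: (gap_contraction kappa_gt0 L_gt0 M_gt0 _ (growth _ _ (X_x k.+1) p_proj)).
- by have := proj1 f_min _ (X_x k.+1); lra.
- apply: Rle_trans gap_le _; apply: Rmult_le_compat_r; first exact: norm_nonneg.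
  apply: Rmult_le_compat_r; first exact: norm_nonneg.
  by rewrite /M /Rdiv; nra.
- by have := descent k; lra.
Qed.
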